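(* Let $T$ be a $d$-ary tree with $n$ leaves and let $1\le k<\ell\le n$. For $m\ge 1$ let $A^{(m)}$ be the tree obtained from $T$ by attaching a $d$-ary caret at the $k$-th leaf $m$ times in succession (so $A^{(1)}=T_k$, $A^{(j+1)}=(A^{(j)})_k$), and let $B^{(1)}=T_\ell$ and $B^{(j+1)}=(B^{(j)})_{\ell+j(d-1)}$. Then in $F_d$, $[T_k,T_\ell]^m=[A^{(m)},B^{(m)}]$ for every $m\in\mathbb{N}$.
   Context: Fix $d\ge 2$. A $d$-ary tree is a finite rooted tree in which each non-leaf vertex has exactly $d$ ordered children; leaves are numbered $1,\dots,n$ left to right. For $1\le k\le n(T)$, $T_k$ denotes $T$ with a $d$-ary caret (root with $d$ leaf children) attached to its $k$-th leaf. The Higman–Thompson group $F_d$ consists of classes $[T,U]$ of pairs of $d$-ary trees with the same number $n$ of leaves, under the equivalence generated by $(T,U)\sim(T_k,U_k)$ for $1\le k\le n$, with product $[T,U][U,W]=[T,W]$. *)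

From mathcomp Require Import all_boot.
Set Implicit Arguments.
Unset Strict Implicit.
Unset Printing Implicit Defensive.

Inductive tree : Type := Lf | Nd of list tree.

Fixpoint nleaves (t : tree) : nat :=
  match t with
  | Lf => 1
  | Nd cs => (fix go (l : list tree) : nat :=
               match l with nil => 0 | c :: r => nleaves c + go r end) cs
  end.

Fixpoint dary (d : nat) (t : tree) : bool :=
  match t with
  | Lf => true
  | Nd cs => (size cs == d) &&
             (fix go (l : list tree) : bool :=
                match l with nil => true | c :: r => dary d c && go r end) cs
  end.

Definition caret (d : nat) : tree := Nd (nseq d Lf).

(* attach a d-ary caret at the leaf with 0-based index i (left to right) *)
Fixpoint graft0 (d : nat) (t : tree) (i : nat) : tree :=
  match t with
  | Lf => if i == 0 then caret d else Lf
  | Nd cs => Nd ((fix go (l : list tree) (j : nat) : list tree :=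
                   match l with
                   | nil => nil
                   | c :: r => if j < nleaves c then graft0 d c j :: r
                               else c :: go r (j - nleaves c)
                   end) cs i)
  end.

(* T_k : attach a d-ary caret at the k-th leaf (leaves numbered 1..n) *)
Definition expand (d : nat) (T : tree) (k : nat) : tree := graft0 d T k.-1.

Definition valid_pair (d : nat) (p : tree * tree) : Prop :=
  dary d p.1 /\ dary d p.2 /\ nleaves p.1 = nleaves p.2.

Inductive pequiv (d : nat) : tree * tree -> tree * tree -> Prop :=
  | pequiv_refl p : valid_pair d p -> pequiv d p p
  | pequiv_step T U k : valid_pair d (T, U) -> 1 <= k <= nleaves T ->
      pequiv d (T, U) (expand d T k, expand d U k)
  | pequiv_sym p q : pequiv d p q -> pequiv d q p
  | pequiv_trans p q r : pequiv d p q -> pequiv d q r -> pequiv d p r.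

(* Elements of F_d are represented as equivalence classes, i.e. sets of pairs. *)
Definition Fd_elt := tree * tree -> Prop.

Definition cls (d : nat) (T U : tree) : Fd_elt := fun p => pequiv d p (T, U).

Definition Fd_mul (d : nat) (x y : Fd_elt) : Fd_elt :=
  fun p => exists X Y Z, x (X, Y) /\ y (Y, Z) /\ pequiv d p (X, Z).

Definition Fd_one (d : nat) : Fd_elt :=
  fun p => exists X, dary d X /\ pequiv d p (X, X).

Fixpoint Fd_pow (d : nat) (x : Fd_elt) (m : nat) : Fd_elt :=
  match m with 0 => Fd_one d | m'.+1 => Fd_mul d x (Fd_pow d x m') end.

Definition Fd_eq (x y : Fd_elt) : Prop := forall p, x p <-> y p.

Fixpoint treeA (d : nat) (T : tree) (k j : nat) : tree :=
  match j with 0 => T | j'.+1 => expand d (treeA d T k j') k end.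

Fixpoint treeB (d : nat) (T : tree) (l j : nat) : tree :=
  match j with 0 => T | j'.+1 => expand d (treeB d T l j') (l + j' * (d - 1)) end.

From mathcomp Require Import all_boot zify.

(* Writing [T o F] for the tree obtained by attaching the forest [F] at the
   leaves of [T], every pair [(T o F, U o F)] is equivalent to [(T, U)] (peel
   off one caret of [F] at a time), and conversely two pairs are equivalent
   iff they have such an expansion in common: any two d-ary trees have a
   common expansion, and [o] is associative and injective in [F]. This makes
   [[X,Y][Y',Z] = [X',Z']] hold whenever [(X,Y) ~ (X',W)] and
   [(Y',Z) ~ (W,Z')].
   For the theorem, expanding [k] first commutes with the caret at [l], which
   only shifts by [d - 1] per caret attached to its left:
   [(T_k, T_l) ~ (A^(m+1), A^(m)_(l + m(d-1)))] and
   [(A^(m), B^(m)) ~ (A^(m)_(l + m(d-1)), B^(m+1))], so by induction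
   [[T_k,T_l] [A^(m),B^(m)] = [A^(m+1),B^(m+1)]]. *)

Set Implicit Arguments.
Unset Strict Implicit.
Unset Printing Implicit Defensive.

Lemma all_take_drop (T : Type) (P : pred T) n s :
  all P s -> all P (take n s) && all P (drop n s).
Proof. by rewrite -all_cat cat_take_drop. Qed.

Definition tree_ind_all (P : tree -> Prop) (P_Lf : P Lf)
    (P_Nd : forall cs, foldr (fun c acc => P c /\ acc) True cs -> P (Nd cs)) :
    forall t, P t :=
  fix ind t := match t with
    | Lf => P_Lf
    | Nd cs => P_Nd cs ((fix ind_seq cs : foldr (fun c acc => P c /\ acc) True cs :=
        match cs with nil => I | c :: r => conj (ind c) (ind_seq r) end) cs)
    end.

Lemma nleaves_Nd cs : nleaves (Nd cs) = sumn (map nleaves cs).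
Proof. by elim: cs => //= c cs <-. Qed.

Lemma sumn_nleaves1 t : sumn (map nleaves [:: t]) = nleaves t.
Proof. exact: addn0. Qed.

Lemma dary_Nd d cs : dary d (Nd cs) = (size cs == d) && all (dary d) cs.
Proof. by rewrite /=; congr andb; elim: cs => //= c cs ->. Qed.

(** * Leaf substitution *)

(* [tsubst t F] replaces the [i]-th leaf of [t] by the [i]-th tree of [F]; it is
   only meaningful when [size F = nleaves t]. *)
Fixpoint tsubst (t : tree) (F : seq tree) : tree :=
  match t with
  | Lf => head Lf F
  | Nd cs => Nd ((fix go (cs F : seq tree) : seq tree :=
      match cs with
      | nil => nil
      | c :: r => tsubst c (take (nleaves c) F) :: go r (drop (nleaves c) F)
      end) cs F)
  end.

Fixpoint fsubst (cs F : seq tree) : seq tree :=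
  match cs with
  | nil => nil
  | c :: r => tsubst c (take (nleaves c) F) :: fsubst r (drop (nleaves c) F)
  end.

Lemma tsubst_Nd cs F : tsubst (Nd cs) F = Nd (fsubst cs F).
Proof. by rewrite /=; congr Nd; elim: cs F => //= c cs IH F; rewrite IH. Qed.

Lemma size_fsubst cs F : size (fsubst cs F) = size cs.
Proof. by elim: cs F => //= c cs IH F; rewrite IH. Qed.

Lemma fsubst_cat cs ds F :
  fsubst (cs ++ ds) F = fsubst cs (take (sumn (map nleaves cs)) F)
                        ++ fsubst ds (drop (sumn (map nleaves cs)) F).
Proof.
elim: cs F => [|c cs IH] F /=; first by rewrite drop0.
rewrite IH take_takel ?leq_addr // take_drop drop_drop.
by rewrite [_ + nleaves c]addnC.
Qed.

Lemma fsubst_cat_size cs ds F G : size F = sumn (map nleaves cs) ->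
  fsubst (cs ++ ds) (F ++ G) = fsubst cs F ++ fsubst ds G.
Proof. by move=> sF; rewrite fsubst_cat -sF take_size_cat // drop_size_cat. Qed.

Lemma fsubst1 t F : size F = nleaves t -> fsubst [:: t] F = [:: tsubst t F].
Proof. by move=> sF; rewrite /= take_oversize ?sF. Qed.

Lemma nleaves_tsubst t F :
  size F = nleaves t -> nleaves (tsubst t F) = sumn (map nleaves F).
Proof.
elim/tree_ind_all: t F => [|cs IHcs] F; first by case: F => [|a []] //= _; rewrite addn0.
rewrite tsubst_Nd !nleaves_Nd.
elim: cs IHcs F => [_ []//|c cs IH [IHc IHcs] F sF /=].
rewrite IHc ?IH ?size_takel ?size_drop ?sF ?addKn ?leq_addr //.
by rewrite -sumn_cat -map_cat cat_take_drop.
Qed.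

Lemma eq_tsubst_nleaves T U F G : size F = nleaves T -> size G = nleaves U ->
  tsubst T F = tsubst U G -> sumn (map nleaves F) = sumn (map nleaves G).
Proof. by move=> sF sG E; rewrite -(nleaves_tsubst sF) E nleaves_tsubst. Qed.

Lemma dary_tsubst d t F : dary d t -> all (dary d) F -> dary d (tsubst t F).
Proof.
elim/tree_ind_all: t F => [|cs IHcs] F; first by case: F => //= a F _ /andP[].
rewrite tsubst_Nd !dary_Nd size_fsubst => /andP[-> dcs] /=.
elim: cs IHcs F dcs => //= c cs IH [IHc IHcs] F /andP[dc dcs].
by move/(all_take_drop (nleaves c))=> /andP[dF1 dF2]; rewrite IHc ?IH.
Qed.

Lemma all_dary_fsubst d cs F :
  all (dary d) cs -> all (dary d) F -> all (dary d) (fsubst cs F).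
Proof.
elim: cs F => //= c cs IH F /andP[dc dcs].
by move/(all_take_drop (nleaves c))=> /andP[dF1 dF2]; rewrite dary_tsubst ?IH.
Qed.

Lemma tsubst_leaves t : tsubst t (nseq (nleaves t) Lf) = t.
Proof.
elim/tree_ind_all: t => [//|cs IHcs]; rewrite tsubst_Nd nleaves_Nd; congr Nd.
elim: cs IHcs => //= c cs IH [IHc IHcs].
by rewrite take_nseq ?leq_addr // drop_nseq addKn IHc IH.
Qed.

Lemma fsubst_leaves cs : fsubst cs (nseq (sumn (map nleaves cs)) Lf) = cs.
Proof. by have := tsubst_leaves (Nd cs); rewrite tsubst_Nd nleaves_Nd => -[]. Qed.

Lemma nseqLf_fsubst n F : size F = n -> fsubst (nseq n Lf) F = F.
Proof. by elim: n F => [|n IH] [|a F] //= [sF]; rewrite drop0 IH. Qed.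

Lemma tsubst_assoc t F G : size F = nleaves t -> size G = sumn (map nleaves F) ->
  tsubst (tsubst t F) G = tsubst t (fsubst F G).
Proof.
elim/tree_ind_all: t F G => [|cs IHcs] F G.
  by case: F => [|a []] //= _; rewrite addn0 => sG; rewrite take_oversize ?sG.
rewrite !tsubst_Nd nleaves_Nd => sF sG; congr Nd.
elim: cs IHcs F G sF sG => [//|c cs IH [IHc IHcs] F G sF sG /=].
have sF1 : size (take (nleaves c) F) = nleaves c by rewrite size_takel // sF leq_addr.
have sG1 : sumn (map nleaves (take (nleaves c) F)) <= size G.
  by rewrite sG -{2}(cat_take_drop (nleaves c) F) map_cat sumn_cat leq_addr.
rewrite -[in RHS](cat_take_drop (nleaves c) F) fsubst_cat.
rewrite take_size_cat ?drop_size_cat ?size_fsubst // nleaves_tsubst // IHc ?IH //.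
- by rewrite size_drop sF addKn.
- by rewrite size_drop sG -{1}(cat_take_drop (nleaves c) F) map_cat sumn_cat addKn.
- by rewrite size_takel.
Qed.

Lemma tsubst_inj t F G : size F = nleaves t -> size G = nleaves t ->
  tsubst t F = tsubst t G -> F = G.
Proof.
elim/tree_ind_all: t F G => [|cs IHcs] F G.
  by case: F => [|a []] //; case: G => [|b []] //= _ _ ->.
rewrite !tsubst_Nd nleaves_Nd => sF sG [].
elim: cs IHcs F G sF sG => [_ [] // []//|c cs IH [IHc IHcs] F G sF sG /= [Ec Ecs]].
rewrite -(cat_take_drop (nleaves c) F) -(cat_take_drop (nleaves c) G).
congr (_ ++ _).
  by apply: IHc; rewrite // size_takel // ?sF ?sG leq_addr.
by apply: IH; rewrite // size_drop ?sF ?sG addKn.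
Qed.

(** * Common expansions *)

Definition dforest d n (F : seq tree) := all (dary d) F /\ size F = n.

Lemma all_dary_nseqLf d n : all (dary d) (nseq n Lf).
Proof. by elim: n. Qed.

Lemma dforest_leaves d n : dforest d n (nseq n Lf).
Proof. by split; rewrite ?all_dary_nseqLf ?size_nseq. Qed.

Definition common_expansion d cs ds := exists F G,
  [/\ dforest d (sumn (map nleaves cs)) F, dforest d (sumn (map nleaves ds)) G
    & fsubst cs F = fsubst ds G].

Lemma common_expansion_sym d cs ds :
  common_expansion d cs ds -> common_expansion d ds cs.
Proof. by move=> [F [G [dF dG E]]]; exists G, F. Qed.

Lemma common_expansion_cat d cs ds cs' ds' :
  common_expansion d cs ds -> common_expansion d cs' ds' ->
  common_expansion d (cs ++ cs') (ds ++ ds').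
Proof.
move=> [F [G [[dF sF] [dG sG] E]]] [F' [G' [[dF' sF'] [dG' sG'] E']]].
exists (F ++ F'), (G ++ G'); rewrite !fsubst_cat_size // E E'.
by split=> //; split; rewrite ?all_cat ?dF ?dG ?size_cat ?map_cat ?sumn_cat ?sF ?sG ?sF' ?sG'.
Qed.

Lemma common_expansion_cons d c cs e ds :
  common_expansion d [:: c] [:: e] -> common_expansion d cs ds ->
  common_expansion d (c :: cs) (e :: ds).
Proof. exact: common_expansion_cat. Qed.

Lemma common_expansion_Lf d t : dary d t -> common_expansion d [:: Lf] [:: t].
Proof.
move=> dt; exists [:: t], (nseq (nleaves t) Lf).
rewrite !sumn_nleaves1 !fsubst1 ?size_nseq // tsubst_leaves.
by split=> //; [split; rewrite //= dt | exact: dforest_leaves].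
Qed.

Lemma common_expansion_Nd d cs ds :
  common_expansion d cs ds -> common_expansion d [:: Nd cs] [:: Nd ds].
Proof.
move=> [F [G [[dF sF] [dG sG] E]]]; exists F, G.
by rewrite !sumn_nleaves1 !fsubst1 !nleaves_Nd // !tsubst_Nd E.
Qed.

Lemma common_expansion_tree d a b :
  dary d a -> dary d b -> common_expansion d [:: a] [:: b].
Proof.
elim/tree_ind_all: a b => [|cs IHcs] [|ds] da db.
- exact: common_expansion_Lf.
- exact: common_expansion_Lf.
- exact/common_expansion_sym/common_expansion_Lf.
apply: common_expansion_Nd.
move: da db; rewrite !dary_Nd => /andP[/eqP sc dcs] /andP[/eqP sd dds].
have : size cs = size ds by rewrite sc sd.
elim: cs ds IHcs dcs dds {sc sd} => [|c cs IH] [|e ds] //= [IHc IHcs].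
  by move=> *; exists [::], [::].
move=> /andP[dc dcs] /andP[de dds] [sz].
exact: common_expansion_cons (IHc _ dc de) (IH _ IHcs dcs dds sz).
Qed.

Lemma common_expansion_dary d cs ds : all (dary d) cs -> all (dary d) ds ->
  size cs = size ds -> common_expansion d cs ds.
Proof.
elim: cs ds => [|c cs IH] [|e ds] //=; first by move=> *; exists [::], [::].
move=> /andP[dc dcs] /andP[de dds] [sz].
exact: common_expansion_cons (common_expansion_tree dc de) (IH _ dcs dds sz).
Qed.

Lemma nleaves_caret d : nleaves (caret d) = d.
Proof. by rewrite nleaves_Nd; elim: d => //= d ->. Qed.

Lemma dary_caret d : dary d (caret d).
Proof. by rewrite dary_Nd size_nseq eqxx all_dary_nseqLf. Qed.

Lemma tsubst_caret d F : size F = d -> tsubst (caret d) F = Nd F.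
Proof. by move=> sF; rewrite tsubst_Nd nseqLf_fsubst. Qed.

Definition caret_at d n i := nseq i Lf ++ caret d :: nseq (n - i.+1) Lf.

Lemma size_caret_at d n i : i < n -> size (caret_at d n i) = n.
Proof. by rewrite size_cat /= !size_nseq; lia. Qed.

Lemma sumn_nseqLf n : sumn (map nleaves (nseq n Lf)) = n.
Proof. by elim: n => //= n ->. Qed.

Lemma nleaves_caret_at d n i :
  i < n -> sumn (map nleaves (caret_at d n i)) = n + d - 1.
Proof.
by rewrite map_cat sumn_cat map_cons nleaves_caret /= !sumn_nseqLf; lia.
Qed.

Lemma dforest_caret_at d n i : i < n -> dforest d n (caret_at d n i).
Proof.
move=> lt_in; split; last exact: size_caret_at.
by rewrite all_cat -cat1s all_cat all_seq1 dary_caret !all_dary_nseqLf.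
Qed.

Lemma caret_at_catr d a b i :
  i < a -> caret_at d (a + b) i = caret_at d a i ++ nseq b Lf.
Proof.
by move=> lt_ia; rewrite /caret_at -catA /= -nseqD; congr (_ ++ _ :: nseq _ _); lia.
Qed.

Lemma caret_at_catl d a b i :
  a <= i -> caret_at d (a + b) i = nseq a Lf ++ caret_at d b (i - a).
Proof.
move=> le_ai; rewrite /caret_at catA -nseqD.
by congr (nseq _ _ ++ _ :: nseq _ _); lia.
Qed.

Lemma fsubst_caret_at d n i F G H :
  size F = i -> size G = d -> size H = n - i.+1 ->
  fsubst (caret_at d n i) (F ++ G ++ H) = F ++ Nd G :: H.
Proof.
move=> sF sG sH; rewrite fsubst_cat_size ?sumn_nseqLf // nseqLf_fsubst //.
by rewrite -cat1s fsubst_cat_size ?sumn_nleaves1 ?fsubst1 ?nleaves_caret ?tsubst_caret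
  ?nseqLf_fsubst.
Qed.

Fixpoint graft_seq d (cs : seq tree) (i : nat) : seq tree :=
  match cs with
  | nil => nil
  | c :: r => if i < nleaves c then graft0 d c i :: r
              else c :: graft_seq d r (i - nleaves c)
  end.

Lemma graft0_Nd d cs i : graft0 d (Nd cs) i = Nd (graft_seq d cs i).
Proof. by rewrite /=; congr Nd; elim: cs i => //= c cs IH i; rewrite IH. Qed.

Lemma graft0_tsubst d t i :
  i < nleaves t -> graft0 d t i = tsubst t (caret_at d (nleaves t) i).
Proof.
elim/tree_ind_all: t i => [[]//|cs IHcs] i.
rewrite graft0_Nd tsubst_Nd nleaves_Nd => lt_i; congr Nd.
elim: cs IHcs i lt_i => [//|c cs IH [IHc IHcs] i /= lt_i].
case: (ltnP i (nleaves c)) => [lt_ic | le_ci].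
  rewrite caret_at_catr // take_size_cat ?size_caret_at //.
  by rewrite drop_size_cat ?size_caret_at // fsubst_leaves IHc.
rewrite caret_at_catl // take_size_cat ?size_nseq // drop_size_cat ?size_nseq //.
by rewrite tsubst_leaves IH //; lia.
Qed.

Lemma tsubst_graft0 d t i F : i < nleaves t -> size F = nleaves t + d - 1 ->
  tsubst (graft0 d t i) F = tsubst t (fsubst (caret_at d (nleaves t) i) F).
Proof.
by move=> lt_i sF; rewrite graft0_tsubst // tsubst_assoc ?size_caret_at ?nleaves_caret_at.
Qed.

Lemma nleaves_graft0 d t i :
  i < nleaves t -> nleaves (graft0 d t i) = nleaves t + d - 1.
Proof.
by move=> lt_i; rewrite graft0_tsubst // nleaves_tsubst ?size_caret_at ?nleaves_caret_at.
Qed.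

Lemma dary_graft0 d t i : dary d t -> i < nleaves t -> dary d (graft0 d t i).
Proof.
by move=> dt lt_i; rewrite graft0_tsubst // dary_tsubst //; case: (dforest_caret_at d lt_i).
Qed.

Lemma graft0C d t i j : i < j -> j < nleaves t ->
  graft0 d (graft0 d t j) i = graft0 d (graft0 d t i) (j + d - 1).
Proof.
move=> lt_ij lt_j; have lt_i : i < nleaves t by apply: ltn_trans lt_j.
rewrite [graft0 d (graft0 d t j) i]graft0_tsubst ?nleaves_graft0 //; last by lia.
rewrite [graft0 d (graft0 d t i) _]graft0_tsubst ?nleaves_graft0 //; last by lia.
rewrite (graft0_tsubst d lt_j) (graft0_tsubst d lt_i) !tsubst_assoc;
  rewrite ?size_caret_at ?nleaves_caret_at //; try lia.
congr tsubst; set n := nleaves t in lt_i lt_j *.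
have -> : caret_at d (n + d - 1) i = caret_at d j i ++ nseq d Lf ++ nseq (n - j.+1) Lf.
  by rewrite /caret_at -catA /= -!nseqD; congr (_ ++ _ :: nseq _ _); lia.
have -> : caret_at d (n + d - 1) (j + d - 1) =
          nseq i Lf ++ nseq d Lf ++ caret_at d (n - i.+1) (j - i.+1).
  by rewrite /caret_at !catA -!nseqD; congr (nseq _ _ ++ _ :: nseq _ _); lia.
rewrite !fsubst_caret_at ?size_caret_at ?size_nseq //; try lia.
by rewrite /caret_at -catA; congr (_ ++ _ :: _ ++ _ :: nseq _ _); lia.
Qed.

Lemma nleaves_expand d T k :
  0 < k <= nleaves T -> nleaves (expand d T k) = nleaves T + d - 1.
Proof. by move=> /andP[k_gt0 le_kT]; rewrite nleaves_graft0 //; lia. Qed.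

Lemma dary_expand d T k : dary d T -> 0 < k <= nleaves T -> dary d (expand d T k).
Proof. by move=> dT /andP[k_gt0 le_kT]; rewrite dary_graft0 //; lia. Qed.

Lemma valid_pair_expand d T U k : valid_pair d (T, U) -> 0 < k <= nleaves T ->
  valid_pair d (expand d T k, expand d U k).
Proof.
move=> [dT [dU eTU]] kT; have kU : 0 < k <= nleaves U by rewrite -eTU.
by split; [|split]; rewrite /= ?dary_expand ?nleaves_expand ?eTU.
Qed.

Lemma expandC d T k l : 0 < k < l -> l <= nleaves T ->
  expand d (expand d T l) k = expand d (expand d T k) (l + d - 1).
Proof.
by move=> /andP[k_gt0 lt_kl] le_lT; rewrite /expand graft0C; [congr graft0|..]; lia.
Qed.

(** * The equivalence of pairs of trees *)

Definition is_leaf (t : tree) : bool := if t is Lf then true else false.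

Lemma all_is_leaf F : all is_leaf F -> F = nseq (size F) Lf.
Proof. by elim: F => //= -[|cs] F IH //= /IH <-. Qed.

Lemma has_node F : ~~ all is_leaf F -> exists F1 cs F2, F = F1 ++ Nd cs :: F2.
Proof.
elim: F => //= -[|cs] F IH /=; last by exists [::], cs, F.
by move=> /IH [F1 [cs [F2 ->]]]; exists (Lf :: F1), cs, F2.
Qed.

Fixpoint ncarets (t : tree) : nat :=
  match t with
  | Lf => 0
  | Nd cs => (fix go (cs : seq tree) : nat :=
               match cs with nil => 1 | c :: r => ncarets c + go r end) cs
  end.

Lemma ncarets_Nd cs : ncarets (Nd cs) = (sumn (map ncarets cs)).+1.
Proof. by elim: cs => //= c cs ->; rewrite addnS. Qed.

Lemma pequiv_tsubst d T U F : valid_pair d (T, U) -> dforest d (nleaves T) F ->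
  pequiv d (T, U) (tsubst T F, tsubst U F).
Proof.
(* Induction on the carets of [F]: its first non-leaf tree [Nd cs] is a caret
   at leaf [size F1], into which the trees [cs] are substituted. *)
move: {2}(sumn (map ncarets F)).+1 (ltnSn (sumn (map ncarets F))) => N.
elim: N T U F => // N IH T U F lt_FN vTU [dF sF]; have [dT [dU eTU]] := vTU.
have [/all_is_leaf FLf | /has_node [F1 [cs [F2 EF]]]] := boolP (all is_leaf F).
  by rewrite FLf sF tsubst_leaves eTU tsubst_leaves; apply: pequiv_refl.
move: dF; rewrite {1}EF all_cat -cat1s all_cat all_seq1 dary_Nd.
move=> /and3P[dF1 /andP[/eqP scs dcs] dF2].
have sF2 : size F2 = nleaves T - (size F1).+1.
  by rewrite -sF EF size_cat /=; lia.
have lt_iT : size F1 < nleaves T by rewrite -sF EF size_cat /=; lia.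
have sG : size (F1 ++ cs ++ F2) = nleaves T + d - 1 by rewrite !size_cat scs sF2; lia.
have EF' : F = fsubst (caret_at d (nleaves T) (size F1)) (F1 ++ cs ++ F2).
  by rewrite fsubst_caret_at.
apply: pequiv_trans (pequiv_step (k := (size F1).+1) vTU _) _; first by lia.
rewrite EF' -tsubst_graft0 // eTU -tsubst_graft0 -?eTU //; apply: IH.
- move: lt_FN; rewrite EF !map_cat !sumn_cat map_cons ncarets_Nd /=; lia.
- by apply: (valid_pair_expand (k := (size F1).+1) vTU); lia.
split; first by rewrite !all_cat dF1 dcs dF2.
by rewrite /expand nleaves_graft0.
Qed.

Definition joinable d (p q : tree * tree) :=
  [/\ valid_pair d p, valid_pair d q & exists F G,
    [/\ dforest d (nleaves p.1) F, dforest d (nleaves q.1) G,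
        tsubst p.1 F = tsubst q.1 G & tsubst p.2 F = tsubst q.2 G]].

Lemma joinable_pequiv d p q : joinable d p q -> pequiv d p q.
Proof.
case: p q => [T U] [T' U'] [vp vq [F [G [dF dG /= E1 E2]]]].
apply: pequiv_trans (pequiv_tsubst vp dF) _; rewrite E1 E2.
exact/pequiv_sym/pequiv_tsubst.
Qed.

Lemma joinable_trans d p q r : joinable d p q -> joinable d q r -> joinable d p r.
Proof.
case: p q r => [T U] [T' U'] [T'' U''].
move=> [vp [_ [_ eTU']] [F [G [[dF sF] [dG sG] /= ET EU]]]].
move=> [_ vr [F' [G' [[dF' sF'] [dG' sG'] /= ET' EU']]]].
have [H [H' [[dH sH] [dH' sH'] EH]]] := common_expansion_dary dG dF' (etrans sG (esym sF')).
have [[_ [_ eTU]] [_ [_ eTU'']]] := (vp, vr).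
have eFG := eq_tsubst_nleaves sF sG ET; have eFG' := eq_tsubst_nleaves sF' sG' ET'.
split=> //; exists (fsubst F H), (fsubst G' H'); split=> /=.
- by split; rewrite ?all_dary_fsubst ?size_fsubst.
- by split; rewrite ?all_dary_fsubst ?size_fsubst.
- rewrite -tsubst_assoc ?eFG // ET tsubst_assoc // EH.
  by rewrite -tsubst_assoc // ET' tsubst_assoc -?eFG'.
rewrite -tsubst_assoc -?eTU ?eFG // EU tsubst_assoc -?eTU' // EH.
by rewrite -tsubst_assoc -?eTU' // EU' tsubst_assoc -?eTU'' -?eFG'.
Qed.

Lemma pequiv_joinable d p q : pequiv d p q -> joinable d p q.
Proof.
elim=> {p q} [[T U] vp | T U k vp kT | p q _ [vp vq [F [G [dF dG E1 E2]]]] | p q r _ + _].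
- split=> //; exists (nseq (nleaves T) Lf), (nseq (nleaves T) Lf).
  by split=> //; apply: dforest_leaves.
- have [_ [_ eTU]] := vp; have [_ [_ eTUk]] := valid_pair_expand vp kT.
  have lt_kT : k.-1 < nleaves T by lia.
  split=> //; first exact: valid_pair_expand.
  exists (caret_at d (nleaves T) k.-1), (nseq (nleaves (expand d T k)) Lf).
  split=> /=; [exact: dforest_caret_at | exact: dforest_leaves | |].
  + by rewrite tsubst_leaves /expand graft0_tsubst.
  + by rewrite eTUk tsubst_leaves /expand graft0_tsubst -?eTU.
- by split=> //; exists G, F.
- exact: joinable_trans.
Qed.

Lemma pequivP d p q : pequiv d p q <-> joinable d p q.
Proof. by split; [apply: pequiv_joinable | apply: joinable_pequiv]. Qed.

Lemma pequiv_concat d X Y Z X' Y' Z' :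
  pequiv d (X, Y) (X', Y') -> pequiv d (Y, Z) (Y', Z') -> pequiv d (X, Z) (X', Z').
Proof.
move=> /pequivP [[dX [dY eXY]] [dX' [dY' eXY']] [F [F' [[dF sF] [dF' sF'] /= EX EY]]]].
move=> /pequivP [[_ [dZ eYZ]] [_ [dZ' eYZ']] [G [G' [[dG sG] [dG' sG'] /= EY2 EZ]]]].
have sFG : size F = size G by rewrite sF sG eXY.
have [H [K [[dH sH] [dK sK] EHK]]] := common_expansion_dary dF dG sFG.
have sFY : size F = nleaves Y by rewrite sF.
have sF'Y : size F' = nleaves Y' by rewrite sF'.
have eFF' := eq_tsubst_nleaves sFY sF'Y EY; have eGG' := eq_tsubst_nleaves sG sG' EY2.
(* [tsubst Y'] is injective, so [F' o H = G' o K] follows from [F o H = G o K]. *)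
have EH : fsubst F' H = fsubst G' K.
  apply: (@tsubst_inj Y'); rewrite ?size_fsubst //.
  by rewrite -!tsubst_assoc -?eFF' -?eGG' // -EY -EY2 !tsubst_assoc // EHK.
have vXZ : valid_pair d (X, Z) by do !split=> //=; rewrite eXY.
have vXZ' : valid_pair d (X', Z') by do !split=> //=; rewrite eXY'.
apply/pequivP; split=> //; exists (fsubst F H), (fsubst F' H); split=> /=.
- by split; rewrite ?all_dary_fsubst ?size_fsubst.
- by split; rewrite ?all_dary_fsubst ?size_fsubst.
- by rewrite -!tsubst_assoc -?eFF' // EX.
have sGZ : size G = nleaves Z by rewrite sG.
have sG'Z : size G' = nleaves Z' by rewrite sG'.
by rewrite EHK EH -!tsubst_assoc -?eGG' // EZ.
Qed.

Lemma pequiv_diag d X T : dary d X -> dary d T -> pequiv d (X, X) (T, T).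
Proof.
move=> dX dT; have [F [G [[dF sF] [dG sG] E]]] := common_expansion_tree dX dT.
rewrite !sumn_nleaves1 in sF sG; move: E; rewrite !fsubst1 // => -[E].
by apply/pequivP; split; [by [] | by [] | exists F, G].
Qed.

Lemma Fd_eq_trans x y z : Fd_eq x y -> Fd_eq y z -> Fd_eq x z.
Proof. by move=> xy yz p; split=> [/xy/yz | /yz/xy]. Qed.

Lemma eq_Fd_mulr d x y y' : Fd_eq y y' -> Fd_eq (Fd_mul d x y) (Fd_mul d x y').
Proof.
by move=> yy' p; split=> -[X [Y [Z [xXY [/yy' yYZ pXZ]]]]]; exists X, Y, Z.
Qed.

Lemma Fd_one_cls d T : dary d T -> Fd_eq (Fd_one d) (cls d T T).
Proof.
move=> dT p; split=> [[X [dX pXX]] | pTT]; last by exists T.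
exact: pequiv_trans pXX (pequiv_diag dX dT).
Qed.

Lemma Fd_mul_cls d X Y Y' Z X' W Z' :
  pequiv d (X, Y) (X', W) -> pequiv d (Y', Z) (W, Z') ->
  Fd_eq (Fd_mul d (cls d X Y) (cls d Y' Z)) (cls d X' Z').
Proof.
move=> eXY eYZ p; split=> [[X0 [Y0 [Z0 [e0 [e1 e2]]]]] | pXZ].
  exact: pequiv_trans e2 (pequiv_concat (pequiv_trans e0 eXY) (pequiv_trans e1 eYZ)).
by exists X', W, Z'; split; [exact: pequiv_sym | split; first exact: pequiv_sym].
Qed.

Lemma nleaves_treeA d T k m : 0 < d -> 0 < k <= nleaves T ->
  nleaves (treeA d T k m) = nleaves T + m * (d - 1).
Proof.
move=> d_gt0 kT; elim: m => [|m IH] /=; first by rewrite addn0.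
by rewrite nleaves_expand; rewrite IH ?mulSn; move: (m * (d - 1)) => x; lia.
Qed.

Lemma dary_treeA d T k m : 0 < d -> dary d T -> 0 < k <= nleaves T ->
  dary d (treeA d T k m).
Proof.
move=> d_gt0 dT kT; elim: m => [//|m IH] /=.
by rewrite dary_expand // nleaves_treeA //; move: (m * (d - 1)) => x; lia.
Qed.

Lemma nleaves_treeB d T l m : 0 < d -> 0 < l <= nleaves T ->
  nleaves (treeB d T l m) = nleaves T + m * (d - 1).
Proof.
move=> d_gt0 lT; elim: m => [|m IH] /=; first by rewrite addn0.
by rewrite nleaves_expand; rewrite IH ?mulSn; move: (m * (d - 1)) => x; lia.
Qed.

Lemma dary_treeB d T l m : 0 < d -> dary d T -> 0 < l <= nleaves T ->
  dary d (treeB d T l m).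
Proof.
move=> d_gt0 dT lT; elim: m => [//|m IH] /=.
by rewrite dary_expand // nleaves_treeB //; move: (m * (d - 1)) => x; lia.
Qed.

Lemma treeASr d T k m : treeA d T k m.+1 = treeA d (expand d T k) k m.
Proof. by elim: m => //= m ->. Qed.

Lemma treeA_expand d T k l m : 0 < d -> 0 < k < l -> l <= nleaves T ->
  treeA d (expand d T l) k m = expand d (treeA d T k m) (l + m * (d - 1)).
Proof.
move=> d_gt0 kl lT; elim: m => [|m IH] /=; first by rewrite addn0.
rewrite IH expandC ?nleaves_treeA ?mulSn //; first congr expand.
all: by move: (m * (d - 1)) => x; lia.
Qed.

Lemma pequiv_treeA d P Q k m : 0 < d -> valid_pair d (P, Q) -> 0 < k <= nleaves P ->
  pequiv d (P, Q) (treeA d P k m, treeA d Q k m).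
Proof.
move=> d_gt0 [dP [dQ ePQ]] kP; have kQ : 0 < k <= nleaves Q by rewrite -ePQ.
elim: m => [|m IH] /=; first exact: pequiv_refl.
apply: pequiv_trans IH (pequiv_step _ _).
  by do !split; rewrite /= ?dary_treeA ?nleaves_treeA // ePQ.
by rewrite nleaves_treeA //; move: (m * (d - 1)) => x; lia.
Qed.

Unset Implicit Arguments.

Theorem mainTheorem7 (d : nat) (T : tree) (k l m : nat) :
  2 <= d -> dary d T -> 1 <= k -> k < l -> l <= nleaves T ->
  Fd_eq (Fd_pow d (cls d (expand d T k) (expand d T l)) m)
        (cls d (treeA d T k m) (treeB d T l m)).
Proof.
move=> d_ge2 dT k_gt0 lt_kl le_lT; have d_gt0 : 0 < d by apply: ltnW.
have kT : 0 < k <= nleaves T by lia.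
have lT : 0 < l <= nleaves T by lia.
have kl : 0 < k < l by lia.
elim: m => [|m IH]; first exact: Fd_one_cls.
set A := treeA d T k m; set B := treeB d T l m; set i := l + m * (d - 1).
have iA : 0 < i <= nleaves A.
  by rewrite /A /i nleaves_treeA //; move: (m * (d - 1)) => x; lia.
have vAB : valid_pair d (A, B).
  by do !split; rewrite /= ?dary_treeA ?dary_treeB ?nleaves_treeA ?nleaves_treeB.
apply: Fd_eq_trans (eq_Fd_mulr _ _ IH) (Fd_mul_cls (W := expand d A i) _ (pequiv_step vAB iA)).
rewrite treeASr /A /i -treeA_expand //.
apply: pequiv_treeA => //.
  by do !split; rewrite /= ?dary_expand ?nleaves_expand.
by rewrite nleaves_expand //; lia.
Qed.
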